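(* Let $k$ be a positive integer and $Y$ a finite set. The algebra $\mathbf A=Y^{[k]}$ is strongly abelian (i.e., the full relation $A\times A$ is a strongly abelian congruence) and $c_{\mathbf A}(n)\le |Y|^{n^{1/k}}$ for every $n$.
   Context: Fix the signature consisting of a unary symbol $s$ and a $k$-ary symbol $d$. For a set $Y$, $Y^{[k]}$ is the algebra with universe $Y^k$ and operations $s((y_1,y_2,\dots,y_k))=(y_2,\dots,y_k,y_1)$ and $d((y^1_1,\dots,y^1_k),\dots,(y^k_1,\dots,y^k_k))=(y^1_1,y^2_2,\dots,y^k_k)$. For a finite algebra $\mathbf A$, $c_{\mathbf A}(n)$ is the maximum of $|\mathrm{Hom}(\mathbf X,\mathbf A)|$ over algebras $\mathbf X$ in the signature of $\mathbf A$ with at most $n$ elements. A congruence $\alpha$ of $\mathbf A$ is strongly abelian if for every $m\ge1$, every $m$-ary term operation $t$ of $\mathbf A$ and all $x_1,\dots,x_m,y_1,\dots,y_m,z_2,\dots,z_m\in A$ with $(x_i,y_i)\in\alpha$ for all $i$ and $(y_i,z_i)\in\alpha$ for $i\ge2$, $t(x_1,\dots,x_m)=t(y_1,\dots,y_m)$ implies $t(x_1,z_2,\dots,z_m)=t(y_1,z_2,\dots,z_m)$. *)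

From HB Require Import structures.
From mathcomp Require Import all_boot all_order all_algebra.
From mathcomp Require Import all_classical all_reals all_analysis.
Set Implicit Arguments. Unset Strict Implicit. Unset Printing Implicit Defensive.

(* Signature: one unary symbol s and one k-ary symbol d.
   An algebra in this signature on a carrier T is given by
   sT : T -> T and dT : ('I_k -> T) -> T. *)

Inductive term (k m : nat) : Type :=
  | Var : 'I_m -> term k m
  | Sop : term k m -> term k m
  | Dop : ('I_k -> term k m) -> term k m.

Fixpoint eval_term (k m : nat) (T : Type) (sT : T -> T) (dT : ('I_k -> T) -> T)
    (e : 'I_m -> T) (t : term k m) : T :=
  match t with
  | Var i => e i
  | Sop u => sT (eval_term sT dT e u)
  | Dop f => dT (fun j => eval_term sT dT e (f j))
  end.

Definition is_congruence (k : nat) (T : Type) (sT : T -> T) (dT : ('I_k -> T) -> T)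
    (alpha : T -> T -> Prop) : Prop :=
  [/\ (forall x, alpha x x),
      (forall x y, alpha x y -> alpha y x),
      (forall x y z, alpha x y -> alpha y z -> alpha x z),
      (forall x y, alpha x y -> alpha (sT x) (sT y)) &
      (forall f g : 'I_k -> T, (forall i, alpha (f i) (g i)) -> alpha (dT f) (dT g))].

(* alpha is a strongly abelian congruence: the condition of the paper, where
   the tuple (x_1, z_2, ..., z_m) is encoded as the function which is x at
   index 0 and z elsewhere (z at index 0 is irrelevant). *)
Definition strongly_abelian_cong (k : nat) (T : Type) (sT : T -> T)
    (dT : ('I_k -> T) -> T) (alpha : T -> T -> Prop) : Prop :=
  is_congruence sT dT alpha /\
  forall (m : nat), 0 < m ->
  forall (t : term k m) (x y z : 'I_m -> T),
    (forall i, alpha (x i) (y i)) ->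
    (forall i : 'I_m, 0 < i -> alpha (y i) (z i)) ->
    eval_term sT dT x t = eval_term sT dT y t ->
    eval_term sT dT (fun i : 'I_m => if val i == 0 then x i else z i) t =
    eval_term sT dT (fun i : 'I_m => if val i == 0 then y i else z i) t.

Definition powk_s (k : nat) (Y : finType) (y : {ffun 'I_k -> Y}) : {ffun 'I_k -> Y} :=
  [ffun i => y (ordS i)].

Definition powk_d (k : nat) (Y : finType) (f : 'I_k -> {ffun 'I_k -> Y}) : {ffun 'I_k -> Y} :=
  [ffun i => f i i].

Definition is_hom_powk (k : nat) (Y : finType) (T : finType) (sX : T -> T)
    (dX : ('I_k -> T) -> T) (h : {ffun T -> {ffun 'I_k -> Y}}) : bool :=
  [forall x, h (sX x) == powk_s (h x)] &&
  [forall f : {ffun 'I_k -> T}, h (dX f) == powk_d (fun i => h (f i))].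

Definition nhom_powk (k : nat) (Y : finType) (T : finType) (sX : T -> T)
    (dX : ('I_k -> T) -> T) : nat :=
  #|[set h : {ffun T -> {ffun 'I_k -> Y}} | is_hom_powk sX dX h]|.

From HB Require Import structures.
From mathcomp Require Import all_boot all_order all_algebra.
From mathcomp Require Import all_classical all_reals all_analysis.
Set Implicit Arguments. Unset Strict Implicit. Unset Printing Implicit Defensive.
Import Order.TTheory GRing.Theory Num.Theory.
Local Open Scope ring_scope.

(* Coordinate j of a term operation of Y^[k] copies one fixed coordinate of one
   fixed argument, so the full congruence is strongly abelian.
   For the count, let C be the set of columns x |-> (h x)_0, h ranging over
   Hom(X, Y^[k]).  Since (h x)_j = (h (s^j x))_0, a homomorphism is determined
   by its column entries, so |Hom(X, Y^[k])| <= |Y|^|C|.  Conversely, columns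
   c_0, ..., c_(k-1) of points x_0, ..., x_(k-1) are the k coordinate columns of
   the single point d(s^(k-0) x_0, ..., s^(k-(k-1)) x_(k-1)), so |C|^k <= |X|. *)

Section PowkTerms.
Variables (k : nat) (Y : finType).

Fixpoint term_src {m} (t : term k m) : 'I_k -> 'I_m * 'I_k :=
  match t with
  | Var i => fun j => (i, j)
  | Sop u => fun j => term_src u (ordS j)
  | Dop f => fun j => term_src (f j) j
  end.

Lemma eval_term_powk m (t : term k m) (x : 'I_m -> {ffun 'I_k -> Y}) j :
  eval_term (@powk_s k Y) (@powk_d k Y) x t j = x (term_src t j).1 (term_src t j).2.
Proof. by elim: t j => [i|u IHu|f IHf] j /=; rewrite ?ffunE. Qed.

Lemma powk_strongly_abelian :
  strongly_abelian_cong (@powk_s k Y) (@powk_d k Y) (fun _ _ => True).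
Proof.
split; first by [].
move=> m _ t x y z _ _ /ffunP exy; apply/ffunP => j.
by have := exy j; rewrite !eval_term_powk; case: ifP.
Qed.

End PowkTerms.

Lemma iter_ordS n j (i : 'I_n) : val (iter j (@ordS n) i) = ((i + j) %% n)%N.
Proof.
elim: j => [|j IHj] /=; first by rewrite addn0 modn_small.
by rewrite IHj -addn1 modnDml addn1 addnS.
Qed.

Section PowkHom.
Variables (k : nat) (Y T : finType) (sX : T -> T) (dX : ('I_k.+1 -> T) -> T).
Variable h : {ffun T -> {ffun 'I_k.+1 -> Y}}.
Hypothesis hom_h : is_hom_powk sX dX h.

Lemma hom_powk_iter j x i : h (iter j sX x) i = h x (iter j (@ordS k.+1) i).
Proof.
have /andP[/forallP hom_s _] := hom_h.
elim: j i => [|j IHj] i //=.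
by rewrite (eqP (hom_s _)) ffunE IHj -iterS iterSr.
Qed.

Lemma hom_powk_d (f : 'I_k.+1 -> T) j : h (dX f) j = h (f j) j.
Proof.
have /andP[_ /forallP/(_ [ffun i => f i])/eqP] := hom_h.
have -> : (fun_of_fin [ffun i => f i] : 'I_k.+1 -> T) = f.
  by apply: funext => i; rewrite ffunE.
by move=> ->; rewrite ffunE.
Qed.

Lemma hom_powk_coord x (j : 'I_k.+1) : h x j = h (iter j sX x) ord0.
Proof.
rewrite hom_powk_iter; congr (h x _); apply: val_inj.
by rewrite iter_ordS add0n modn_small.
Qed.

Lemma hom_powk_iter_back x (j : 'I_k.+1) : h (iter (k.+1 - j) sX x) j = h x ord0.
Proof.
rewrite hom_powk_iter; congr (h x _); apply: val_inj.
by rewrite iter_ordS subnKC ?modnn // ltnW.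
Qed.

End PowkHom.

Lemma card_le_exp_columns (H X Y : finType) (M : H -> X -> Y) :
  (forall h1 h2, (forall x, M h1 x = M h2 x) -> h1 = h2) ->
  (#|H| <= #|Y| ^ #|[set [ffun h => M h x] | x : X]|)%N.
Proof.
move=> M_inj; set C := [set _ | x : X].
pose rows (h : H) : {ffun {c | c \in C} -> Y} := [ffun c : {c | c \in C} => val c h].
have rows_inj : injective rows.
  move=> h1 h2 /ffunP eq_rows; apply: M_inj => x.
  have Cx : [ffun h => M h x] \in C by apply: imset_f.
  by have := eq_rows (exist (fun c => c \in C) _ Cx); rewrite !ffunE.
by have := leq_card rows rows_inj; rewrite card_ffun card_sig.
Qed.

Section PowkHomCount.
Variables (k : nat) (Y T : finType) (sX : T -> T) (dX : ('I_k.+1 -> T) -> T).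

Definition powk_homs := {h : {ffun T -> {ffun 'I_k.+1 -> Y}} | is_hom_powk sX dX h}.

Definition hom_column (x : T) : {ffun powk_homs -> Y} :=
  [ffun h : powk_homs => val h x ord0].

Definition hom_columns := [set hom_column x | x : T].

Lemma nhom_powk_le_columns : (nhom_powk Y sX dX <= #|Y| ^ #|hom_columns|)%N.
Proof.
rewrite /nhom_powk cardsE -card_sig.
apply: (@card_le_exp_columns _ _ _ (fun (h : powk_homs) x => val h x ord0)).
move=> h1 h2 eq0; apply/val_inj/ffunP => x; apply/ffunP => j.
by rewrite (hom_powk_coord (valP h1)) (hom_powk_coord (valP h2)).
Qed.

Lemma card_hom_columns_exp_le : (#|hom_columns| ^ k.+1 <= #|T|)%N.
Proof.
pose all_columns x : {ffun 'I_k.+1 -> {ffun powk_homs -> Y}} :=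
  [ffun j => [ffun h : powk_homs => val h x j]].
rewrite -[in X in (_ ^ X)%N](card_ord k.+1) -card_ffun_on.
apply: leq_trans (subset_leq_card _) (leq_image_card all_columns T).
apply/fintype.subsetP => F /ffun_onP F_col.
have /fin_all_exists[xs F_xs] j : exists x, F j = hom_column x.
  by have /imsetP[x _ ->] := F_col j; exists x.
apply/codomP; exists (dX (fun j => iter (k.+1 - j) sX (xs j))).
apply/ffunP => j; apply/ffunP => h; rewrite F_xs !ffunE.
by rewrite (hom_powk_d (valP h)) (hom_powk_iter_back (valP h)).
Qed.

End PowkHomCount.

Lemma ler_nat_rootR (R : realType) (c n k : nat) :
  (0 < k)%N -> (c ^ k <= n)%N -> (c%:R : R) <= n%:R `^ k%:R^-1.
Proof.
move=> k_gt0 ckn; have kR : (k%:R : R) != 0 by rewrite pnatr_eq0 -lt0n.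
have -> : (c%:R : R) = (c%:R `^ k%:R) `^ k%:R^-1.
  by rewrite -powRrM divff // powRr1 ?ler0n.
apply: ge0_ler_powR; rewrite ?invr_ge0 ?ler0n ?nnegrE ?powR_ge0 //.
by rewrite powR_mulrn ?ler0n // -natrX ler_nat.
Qed.

Lemma ler_nat_expR_root (R : realType) (N b c n k : nat) :
  (0 < k)%N -> (0 < c)%N -> (N <= b ^ c)%N -> (c ^ k <= n)%N ->
  (N%:R : R) <= b%:R `^ (n%:R `^ k%:R^-1).
Proof.
move=> k_gt0 c_gt0 Nbc ckn.
have [b0|b_gt0] := posnP b.
  by move: Nbc; rewrite b0 exp0n // leqn0 => /eqP ->; rewrite powR_ge0.
apply: le_trans (ler_powR _ (ler_nat_rootR R k_gt0 ckn)); last by rewrite ler1n.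
by rewrite powR_mulrn ?ler0n // -natrX ler_nat.
Qed.

Theorem corollary3p8 (R : realType) (k : nat) (Y : finType) :
  (0 < k)%N ->
  strongly_abelian_cong (@powk_s k Y) (@powk_d k Y) (fun _ _ => True) /\
  (forall (n : nat) (T : finType) (sX : T -> T) (dX : ('I_k -> T) -> T),
     (0 < #|T|)%N -> (#|T| <= n)%N ->
     ((nhom_powk Y sX dX)%:R : R) <= (#|Y|%:R : R) `^ ((n%:R : R) `^ (k%:R)^-1)).
Proof.
case: k => [//|k] _; split; first exact: powk_strongly_abelian.
move=> n T sX dX /card_gt0P[x _] Tn.
have cols_gt0 : (0 < #|hom_columns Y sX dX|)%N.
  by apply/card_gt0P; exists (hom_column Y sX dX x); apply: imset_f.
exact: (ler_nat_expR_root R (ltn0Sn k) cols_gt0 (nhom_powk_le_columns Y sX dX)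
  (leq_trans (card_hom_columns_exp_le Y sX dX) Tn)).
Qed.
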